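(* Suppose Assumption (A1) holds and, in addition, $A$ is $\rho$-strongly monotone w.r.t. $S$ for some $\rho>0$, i.e. $\langle u-v,x-y\rangle\ge\rho\|x-y\|_S^2$ for all $(x,u),(y,v)\in\operatorname{gra}A$. Assume $\bar L:=\sup_k L_k<1$ and that there exist $\varepsilon_1,\varepsilon_2>0$ and $t>0$ such that for every integer $k\ge1$: $\gamma_k<1/\varepsilon_1$, $$t\Big(1+\frac{L_k}{\varepsilon_2}\Big)\le 2\gamma_k\rho(1-\gamma_k\varepsilon_1),\qquad t\,L_k(\varepsilon_2+1)\le \kappa_k+\nu_k,$$ where $\kappa_k=1-L_{k-1}-L_k-2\gamma_kL_k\mu-\gamma_k^2\mu^2-\frac{\gamma_k\beta}{2}$ and $\nu_k=2\gamma_k^2\rho\mu^2\big(\gamma_k-\frac1{\varepsilon_1}\big)$. Let $x^*\in\operatorname{zer}(A+B+C)$. Then for any $x_0,u_0\in\mathcal H$ the sequences generated by Algorithm NFBHF-M satisfy, for all $k\ge1$, $$(1-L_k)\|x_{k+1}-x^*\|_S^2\le\frac{\Phi_1(x^* )}{(1+t)^k},$$ where $\Phi_1(x^* )=\|x_1-x^*\|_S^2+2\langle u_1,x_1-x^*\rangle+L_0\|y_0-x_0\|_S^2$; in particular $\{x_k\}$ converges $R$-linearly to $x^*$.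
   Context: $\mathcal H$ is a real Hilbert space. $\mathcal P(\mathcal H)$ denotes the set of bounded linear operators $S:\mathcal H\to\mathcal H$ that are self-adjoint and strongly positive ($\langle Sx,x\rangle\ge m\|x\|^2$ for some $m>0$ and all $x$); for such $S$, $S^{-1}\in\mathcal P(\mathcal H)$, $\langle x,y\rangle_S:=\langle Sx,y\rangle$ and $\|x\|_S:=\sqrt{\langle Sx,x\rangle}$. For $S\in\mathcal P(\mathcal H)$, a single-valued $T:\mathcal H\to\mathcal H$ is $L$-Lipschitz continuous w.r.t. $S$ if $\|Tx-Ty\|_{S^{-1}}\le L\|x-y\|_S$ for all $x,y$, and is $\beta^{-1}$-cocoercive w.r.t. $S$ ($\beta>0$) if $\langle Tx-Ty,x-y\rangle\ge \beta^{-1}\|Tx-Ty\|_{S^{-1}}^2$ for all $x,y$. $\operatorname{gra}A=\{(x,u):u\in Ax\}$; $\operatorname{zer}(A+B+C)=\{x\in\mathcal H: 0\in Ax+Bx+Cx\}$. Assumption (A1): fix $S\in\mathcal P(\mathcal H)$. (i) $A:\mathcal H\to2^{\mathcal H}$ is maximally monotone; (ii) $B:\mathcal H\to\mathcal H$ is single-valued, monotone and $\mu$-Lipschitz continuous w.r.t. $S$ ($\mu\ge0$); (iii) $C:\mathcal H\to\mathcal H$ is $\beta^{-1}$-cocoercive w.r.t. $S$ for some $\beta>0$; (iv) $\operatorname{zer}(A+B+C)\neq\emptyset$; (v) there is $\gamma>0$ and, for each $k\in\mathbb N$, a step-size $\gamma_k\ge\gamma$, a constant $L_k\in[0,1)$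 and a (possibly nonlinear) operator $M_k:\mathcal H\to\mathcal H$ such that $\gamma_kM_k-S$ is $L_k$-Lipschitz continuous w.r.t. $S$. (Under (v), $(M_k+A)^{-1}$ is single-valued with full domain.) Algorithm NFBHF-M: given $x_0,u_0\in\mathcal H$, for $k=0,1,2,\dots$ $$y_k=(M_k+A)^{-1}\big(M_kx_k-(B+C)x_k+\gamma_k^{-1}u_k\big),\quad x_{k+1}=y_k-\gamma_kS^{-1}By_k+\gamma_kS^{-1}Bx_k,\quad u_{k+1}=(\gamma_kM_k-S)y_k-(\gamma_kM_k-S)x_k.$$ *)

From HB Require Import structures.
From mathcomp Require Import all_boot all_order all_algebra.
From mathcomp Require Import reals.
Set Implicit Arguments.
Unset Strict Implicit.
Unset Printing Implicit Defensive.
Import Order.TTheory GRing.Theory Num.Theory.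
Local Open Scope ring_scope.

Record inner_product (R : realType) (V : lmodType R) := InnerProduct {
  inner : V -> V -> R;
  inner_sym : forall x y, inner x y = inner y x;
  inner_linear : forall (a : R) (x y z : V),
      inner (a *: x + y) z = a * inner x z + inner y z;
  inner_ge0 : forall x, 0 <= inner x x;
  inner_eq0 : forall x, inner x x = 0 -> x = 0 }.

Section Hilbert.
Variables (R : realType) (V : lmodType R) (ip : inner_product V).

Definition hnorm (x : V) : R := Num.sqrt (inner ip x x).

Definition hilbert_complete : Prop :=
  forall u : nat -> V,
    (forall e : R, 0 < e -> exists N, forall m n, (N <= m)%N -> (N <= n)%N ->
        hnorm (u m - u n) < e) ->
    exists l : V, forall e : R, 0 < e -> exists N, forall n, (N <= n)%N ->
        hnorm (u n - l) < e.

Definition snorm (S : V -> V) (x : V) : R := Num.sqrt (inner ip (S x) x).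

Definition in_P (S : V -> V) : Prop :=
  (forall (a : R) (x y : V), S (a *: x + y) = a *: S x + S y) /\
  (exists c : R, forall x, hnorm (S x) <= c * hnorm x) /\
  (forall x y, inner ip (S x) y = inner ip x (S y)) /\
  (exists m : R, 0 < m /\ forall x, m * hnorm x ^+ 2 <= inner ip (S x) x).

(* set-valued operators are given by their graph: A x u  <->  u \in A x *)
Definition monotone_set (A : V -> V -> Prop) : Prop :=
  forall x u y v, A x u -> A y v -> 0 <= inner ip (u - v) (x - y).

Definition maximal_monotone (A : V -> V -> Prop) : Prop :=
  monotone_set A /\
  forall x u, (forall y v, A y v -> 0 <= inner ip (u - v) (x - y)) -> A x u.

Definition strongly_monotone_wrt (S : V -> V) (rho : R) (A : V -> V -> Prop) :=
  forall x u y v, A x u -> A y v ->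
    rho * snorm S (x - y) ^+ 2 <= inner ip (u - v) (x - y).

Definition monotone_op (T : V -> V) : Prop :=
  forall x y, 0 <= inner ip (T x - T y) (x - y).

Definition lipschitz_wrt (S Sinv : V -> V) (L : R) (T : V -> V) : Prop :=
  forall x y, snorm Sinv (T x - T y) <= L * snorm S (x - y).

Definition cocoercive_wrt (Sinv : V -> V) (beta : R) (T : V -> V) : Prop :=
  forall x y, beta^-1 * snorm Sinv (T x - T y) ^+ 2 <= inner ip (T x - T y) (x - y).

End Hilbert.

From HB Require Import structures.
From mathcomp Require Import all_boot all_order all_algebra.
From mathcomp Require Import reals.
From mathcomp Require Import ring lra.
Import Order.TTheory GRing.Theory Num.Theory.
Local Open Scope ring_scope.

(* Lyapunov argument.  Let Φ_k = ‖x_k - x*‖²_S + 2⟨u_k, x_k - x*⟩ + L_{k-1}‖y_{k-1} - x_{k-1}‖²_S.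
   Strong monotonicity of A at the resolvent point y_k, monotonicity and Lipschitz continuity
   of B, cocoercivity of C and ‖u_{k+1}‖_{S⁻¹} ≤ L_k‖y_k - x_k‖_S give
   Φ_k - Φ_{k+1} ≥ 2γ_kρ‖y_k - x*‖²_S + κ_k‖y_k - x_k‖²_S, while Young's inequality bounds
   Φ_{k+1} above by (1 + L_k/ε₂)‖x_{k+1} - x*‖²_S + L_k(ε₂ + 1)‖y_k - x_k‖²_S and below by
   (1 - L_k)‖x_{k+1} - x*‖²_S.  The step-size conditions turn this into (1 + t)Φ_{k+1} ≤ Φ_k;
   with ‖·‖²_S ≥ m‖·‖² and L_k ≤ L̄ < 1 the geometric decay of Φ gives R-linear convergence
   with ratio (1 + t)^{-1/2}. *)

Lemma young_ineq {R : realFieldType} (a b e : R) : 0 < e ->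
  2 * (a * b) <= a ^+ 2 / e + e * b ^+ 2.
Proof.
move=> e0; have : 0 <= (a - e * b) ^+ 2 / e := divr_ge0 (sqr_ge0 _) (ltW e0).
have -> : (a - e * b) ^+ 2 / e = a ^+ 2 / e + e * b ^+ 2 - 2 * (a * b).
  by field; rewrite gt_eqF.
lra.
Qed.

Lemma geometric_decay {R : realFieldType} (r : R) (a : nat -> R) : 0 <= r ->
  (forall n, r * a n.+1 <= a n) -> forall n, a n * r ^+ n <= a 0%N.
Proof.
move=> r0 step; elim=> [|n IH]; first by rewrite mulr1.
by apply: le_trans IH; rewrite exprS mulrA [a _ * r]mulrC ler_wpM2r ?exprn_ge0.
Qed.

Lemma r_linear_of_sqr_bound {R : rcfType} (e : nat -> R) (K r : R) :
  0 <= K -> 1 < r -> (forall k, e k.+1 ^+ 2 <= K / r ^+ k) ->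
  exists c q : R, 0 <= q /\ q < 1 /\ forall k, e k <= c * q ^+ k.
Proof.
move=> K0 r1 bound; have r0 : 0 < r by apply: lt_trans r1.
set q := Num.sqrt r^-1.
have q0 : 0 < q by rewrite sqrtr_gt0 invr_gt0.
have q1 : q < 1 by rewrite -(sqrtr1 R) ltr_sqrt // invf_lt1.
have sqr_q : q ^+ 2 = r^-1 by rewrite sqr_sqrtr // invr_ge0 ltW.
have decay k : e k.+1 <= Num.sqrt K * q ^+ k.
  apply: le_trans (ler_norm _) _.
  rewrite -(ler_pXn2r (isT : (0 < 2)%N)) ?nnegrE ?mulr_ge0 ?exprn_ge0 ?sqrtr_ge0 ?(ltW q0) //.
  by rewrite real_normK ?num_real // exprMn sqr_sqrtr // -exprM mulnC exprM sqr_q exprVn.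
exists (Num.sqrt K / q + `|e 0%N|), q; split; first exact: ltW.
split=> // -[|k].
  rewrite expr0 mulr1; apply: le_trans (ler_norm _) _.
  by rewrite lerDr divr_ge0 ?sqrtr_ge0 ?(ltW q0).
apply: le_trans (decay k) _.
rewrite mulrDl exprS mulrA divfK ?gt_eqF // lerDl -exprS.
by rewrite mulr_ge0 ?exprn_ge0 ?(ltW q0).
Qed.

Section InnerProduct.
Context {R : realType} {V : lmodType R} {ip : inner_product V}.
Local Notation "⟨ a , b ⟩" := (inner ip a b).

Lemma inner0l z : ⟨0, z⟩ = 0.
Proof. by have := inner_linear ip 1 0 0 z; rewrite scaler0 addr0 mul1r; lra. Qed.

Lemma innerDl a b z : ⟨a + b, z⟩ = ⟨a, z⟩ + ⟨b, z⟩.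
Proof. by have := inner_linear ip 1 a b z; rewrite scale1r mul1r. Qed.

Lemma innerZl r a z : ⟨r *: a, z⟩ = r * ⟨a, z⟩.
Proof. by have := inner_linear ip r a 0 z; rewrite addr0 inner0l addr0. Qed.

Lemma innerNl a z : ⟨- a, z⟩ = - ⟨a, z⟩.
Proof. by rewrite -scaleN1r innerZl mulN1r. Qed.

Lemma innerBl a b z : ⟨a - b, z⟩ = ⟨a, z⟩ - ⟨b, z⟩.
Proof. by rewrite innerDl innerNl. Qed.

Lemma innerDr a b z : ⟨z, a + b⟩ = ⟨z, a⟩ + ⟨z, b⟩.
Proof. by rewrite inner_sym innerDl !(inner_sym ip z). Qed.

Lemma innerZr r a z : ⟨z, r *: a⟩ = r * ⟨z, a⟩.
Proof. by rewrite inner_sym innerZl (inner_sym ip z). Qed.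

Lemma innerNr a z : ⟨z, - a⟩ = - ⟨z, a⟩.
Proof. by rewrite inner_sym innerNl (inner_sym ip z). Qed.

Lemma innerBr a b z : ⟨z, a - b⟩ = ⟨z, a⟩ - ⟨z, b⟩.
Proof. by rewrite innerDr innerNr. Qed.

Lemma snorm_ge0 T x : 0 <= snorm ip T x.
Proof. exact: sqrtr_ge0. Qed.

Section Metric.
Context {S Sinv : V -> V}.
Hypotheses (HS : in_P ip S) (HSinv : forall x, S (Sinv x) = x /\ Sinv (S x) = x).
Local Notation normS := (snorm ip S).
Local Notation normSi := (snorm ip Sinv).

Lemma SD x y : S (x + y) = S x + S y.
Proof. by case: HS => lin _; have := lin 1 x y; rewrite !scale1r. Qed.

Lemma S0 : S 0 = 0.
Proof. by apply: (addrI (S 0)); rewrite -SD !addr0. Qed.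

Lemma SZ a x : S (a *: x) = a *: S x.
Proof. by case: HS => lin _; have := lin a x 0; rewrite !addr0 S0 addr0. Qed.

Lemma SN x : S (- x) = - S x.
Proof. by rewrite -scaleN1r SZ scaleN1r. Qed.

Lemma SB x y : S (x - y) = S x - S y.
Proof. by rewrite SD SN. Qed.

Lemma SK x : S (Sinv x) = x. Proof. by case: (HSinv x). Qed.

Lemma SinvK x : Sinv (S x) = x. Proof. by case: (HSinv x). Qed.

Lemma SinvB x y : Sinv (x - y) = Sinv x - Sinv y.
Proof. by rewrite -[RHS]SinvK SB !SK. Qed.

Lemma inner_Sr x y : ⟨x, S y⟩ = ⟨S x, y⟩.
Proof. by case: HS => _ [_ [sym _]]; rewrite sym. Qed.

Lemma inner_S_sym x y : ⟨S x, y⟩ = ⟨S y, x⟩.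
Proof. by rewrite inner_sym inner_Sr. Qed.

Lemma inner_S_ge0 x : 0 <= ⟨S x, x⟩.
Proof.
case: HS => _ [_ [_ [m [m0 hm]]]]; apply: le_trans (hm x).
exact: mulr_ge0 (ltW m0) (sqr_ge0 _).
Qed.

Lemma sqr_snorm x : normS x ^+ 2 = ⟨S x, x⟩.
Proof. by rewrite sqr_sqrtr // inner_S_ge0. Qed.

Lemma snormN x : normS (- x) = normS x.
Proof. by rewrite /snorm SN innerNl innerNr opprK. Qed.

Lemma snorm_Sinv u : normSi u = normS (Sinv u).
Proof. by rewrite /snorm -{2}(SK u) inner_Sr inner_sym. Qed.

Lemma sqr_snormZ a x : normS (a *: x) ^+ 2 = a ^+ 2 * normS x ^+ 2.
Proof. by rewrite !sqr_snorm SZ innerZl innerZr mulrA -expr2. Qed.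

Lemma sqr_snormB a b : normS (a - b) ^+ 2 = normS a ^+ 2 - 2 * ⟨S b, a⟩ + normS b ^+ 2.
Proof.
rewrite !sqr_snorm SB innerBl !innerBr (inner_S_sym a b); lra.
Qed.

Lemma inner_S_le_snorm a c : ⟨S a, c⟩ <= normS a * normS c.
Proof.
set A := ⟨S a, a⟩; set P := ⟨S a, c⟩; set C := ⟨S c, c⟩.
have quad s : 0 <= A - 2 * s * P + s ^+ 2 * C.
  have := inner_S_ge0 (a - s *: c).
  by rewrite SB SZ !innerBl !innerZl !innerBr !innerZr (inner_S_sym c a) -/A -/P -/C; lra.
have A0 : 0 <= A := inner_S_ge0 a.
have C0 : 0 <= C := inner_S_ge0 c.
have [P0|P0] := lerP P 0; first by apply: le_trans P0 _; rewrite mulr_ge0 ?snorm_ge0.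
have [C_eq0|C_gt0] := eqVneq C 0.
  (* with C = 0 the quadratic in s is affine with nonzero slope *)
  have := quad ((A + 1) / (2 * P)); rewrite C_eq0 mulr0 addr0.
  have -> : A - 2 * ((A + 1) / (2 * P)) * P = - 1 by field; rewrite gt_eqF.
  lra.
have {C_gt0}C_gt0 : 0 < C by rewrite lt_def C_gt0.
have := quad (P / C).
have -> : A - 2 * (P / C) * P + (P / C) ^+ 2 * C = A - P ^+ 2 / C.
  by field; rewrite gt_eqF.
rewrite subr_ge0 ler_pdivrMr // => PP.
rewrite /snorm -/A -/C -sqrtrM // -(ger0_norm (ltW P0)) -sqrtr_sqr ler_sqrt ?mulr_ge0 //.
Qed.

Lemma inner_le_snorm u v : ⟨u, v⟩ <= normSi u * normS v.
Proof. by rewrite snorm_Sinv -{1}(SK u) inner_S_le_snorm. Qed.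

Lemma inner_ge_snorm u v : - (normSi u * normS v) <= ⟨u, v⟩.
Proof. by rewrite lerNl -innerNr -(snormN v) inner_le_snorm. Qed.

Lemma sqr_snorm_shrink a b g e : 0 < g -> 0 < e ->
  (1 - g * e) * normS (a - g *: b) ^+ 2 <= normS a ^+ 2 + g * (e^-1 - g) * normS b ^+ 2.
Proof.
move=> g0 e0; rewrite sqr_snormB sqr_snormZ SZ innerZl !sqr_snorm.
have := inner_S_ge0 (e *: a + (1 - g * e) *: b).
rewrite SD !SZ innerDl !innerZl !innerDr !innerZr (inner_S_sym a b) => sq_ge0.
rewrite -subr_ge0.
(* the defect is (g / e) ‖e a + (1 - g e) b‖²_S *)
have -> : ⟨S a, a⟩ + g * (e^-1 - g) * ⟨S b, b⟩
    - (1 - g * e) * (⟨S a, a⟩ - 2 * (g * ⟨S b, a⟩) + g ^+ 2 * ⟨S b, b⟩) =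
  g / e * (e * (e * ⟨S a, a⟩ + (1 - g * e) * ⟨S b, a⟩)
    + (1 - g * e) * (e * ⟨S b, a⟩ + (1 - g * e) * ⟨S b, b⟩)).
  by field; rewrite gt_eqF.
exact: mulr_ge0 (divr_ge0 (ltW g0) (ltW e0)) sq_ge0.
Qed.

Lemma cocoercive_inner_ge {T : V -> V} {beta : R} (x y z : V) : 0 < beta ->
  cocoercive_wrt ip Sinv beta T ->
  - (beta / 4 * normS (y - x) ^+ 2) <= ⟨T x - T z, y - z⟩.
Proof.
move=> beta0 coco.
set c := normSi (T x - T z); set h := normS (y - x).
have {}coco : beta^-1 * c ^+ 2 <= ⟨T x - T z, x - z⟩ := coco x z.
have cs : - (c * h) <= ⟨T x - T z, y - x⟩ by exact: inner_ge_snorm.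
have sq : 0 <= beta^-1 * c ^+ 2 - c * h + beta / 4 * h ^+ 2.
  rewrite (_ : _ - _ + _ = beta^-1 * (c - beta / 2 * h) ^+ 2); last by field; rewrite gt_eqF.
  by rewrite mulr_ge0 ?sqr_ge0 // invr_ge0 ltW.
have split_yz : ⟨T x - T z, y - z⟩ = ⟨T x - T z, x - z⟩ + ⟨T x - T z, y - x⟩.
  by rewrite !innerBr; lra.
lra.
Qed.

Section NFBHF.
Context {A : V -> V -> Prop} {B C : V -> V} {mu beta rho eps1 eps2 t : R}.
Context {g L : nat -> R} {M : nat -> V -> V} {xs : V} {x y u : nat -> V}.
Hypotheses (HBmon : monotone_op ip B) (HBlip : lipschitz_wrt ip S Sinv mu B).
Hypotheses (Hbeta : 0 < beta) (HC : cocoercive_wrt ip Sinv beta C).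
Hypotheses (Hg : forall k, 0 < g k) (HL0 : forall k, 0 <= L k).
Hypothesis HM : forall k, lipschitz_wrt ip S Sinv (L k) (fun x => g k *: M k x - S x).
Hypotheses (Hrho : 0 < rho) (HAs : strongly_monotone_wrt ip S rho A).
Hypothesis Hxs : A xs (- (B xs + C xs)).
Hypotheses (Heps1 : 0 < eps1) (Heps2 : 0 < eps2) (Ht : 0 < t).
Hypothesis Hcond : forall k : nat, (1 <= k)%N ->
     let kappa := 1 - L k.-1 - L k - 2 * g k * L k * mu - g k ^+ 2 * mu ^+ 2
                  - g k * beta / 2 in
     let nu := 2 * g k ^+ 2 * rho * mu ^+ 2 * (g k - 1 / eps1) in
     [/\ g k < 1 / eps1,
         t * (1 + L k / eps2) <= 2 * g k * rho * (1 - g k * eps1) &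
         t * L k * (eps2 + 1) <= kappa + nu].
Hypothesis Hy : forall k, A (y k) (M k (x k) - (B (x k) + C (x k)) + (g k)^-1 *: u k
                                 - M k (y k)).
Hypothesis Hx : forall k, x k.+1 = y k - g k *: Sinv (B (y k)) + g k *: Sinv (B (x k)).
Hypothesis Hu : forall k,
  u k.+1 = (g k *: M k (y k) - S (y k)) - (g k *: M k (x k) - S (x k)).

Definition lyap k := normS (x k - xs) ^+ 2 + 2 * ⟨u k, x k - xs⟩
                     + L k.-1 * normS (y k.-1 - x k.-1) ^+ 2.

Lemma u_succ_le k : normSi (u k.+1) <= L k * normS (y k - x k).
Proof. by have := HM k (y k) (x k); rewrite /= -Hu. Qed.

Lemma x_succB k z : x k.+1 - z = (y k - z) - g k *: Sinv (B (y k) - B (x k)).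
Proof.
by rewrite Hx SinvB scalerBr opprB addrA [LHS]addrAC (addrAC (y k)) addrAC.
Qed.

Lemma resolvent_strong_mono k :
  g k * (rho * normS (y k - xs) ^+ 2) <=
    ⟨u k, y k - xs⟩ - ⟨u k.+1, y k - xs⟩ - ⟨S (y k - x k), y k - xs⟩
    - g k * ⟨B (y k) - B xs, y k - xs⟩ + g k * ⟨B (y k) - B (x k), y k - xs⟩
    - g k * ⟨C (x k) - C xs, y k - xs⟩.
Proof.
apply: le_trans (ler_wpM2l (ltW (Hg k)) (HAs _ _ _ _ (Hy k) Hxs)) _.
rewrite le_eqVlt; apply/predU1P; left.
rewrite (Hu k) SB !(innerDl, innerNl, innerZl).
by field; rewrite gt_eqF.
Qed.

Lemma lyap_ge k : (1 - L k) * normS (x k.+1 - xs) ^+ 2 <= lyap k.+1.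
Proof.
rewrite /lyap /=; set W := normS (x k.+1 - xs); set h := normS (y k - x k).
have cs : - (normSi (u k.+1) * W) <= ⟨u k.+1, x k.+1 - xs⟩ := inner_ge_snorm _ _.
have u_le : normSi (u k.+1) * W <= L k * h * W := ler_wpM2r (snorm_ge0 _ _) (u_succ_le k).
have := ler_wpM2l (HL0 k) (young_ineq h W 1 ltr01); rewrite divr1 mul1r => young.
lra.
Qed.

Lemma lyap_le k :
  lyap k.+1 <= (1 + L k / eps2) * normS (x k.+1 - xs) ^+ 2
               + L k * (eps2 + 1) * normS (y k - x k) ^+ 2.
Proof.
rewrite /lyap /=; set W := normS (x k.+1 - xs); set h := normS (y k - x k).
have cs : ⟨u k.+1, x k.+1 - xs⟩ <= normSi (u k.+1) * W := inner_le_snorm _ _.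
have u_le : normSi (u k.+1) * W <= L k * h * W := ler_wpM2r (snorm_ge0 _ _) (u_succ_le k).
have := ler_wpM2l (HL0 k) (young_ineq W h eps2 Heps2) => young.
lra.
Qed.

Lemma lyap_descent k :
  2 * g k.+1 * rho * normS (y k.+1 - xs) ^+ 2
  + (1 - L k - L k.+1 - 2 * g k.+1 * L k.+1 * mu - g k.+1 ^+ 2 * mu ^+ 2
     - g k.+1 * beta / 2) * normS (y k.+1 - x k.+1) ^+ 2
  <= lyap k.+1 - lyap k.+2.
Proof.
rewrite /lyap /=.
set gk := g k.+1; set xk := x k.+1; set yk := y k.+1.
set d := Sinv (B yk - B xk); set h := normS (yk - xk); set np := normS (y k - x k).
have gk0 : 0 < gk := Hg k.+1.
have Hxz : xk - xs = (yk - xs) - (yk - xk) by rewrite opprB [RHS]addrC addrA subrK.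
have Hwz : x k.+2 - xs = (yk - xs) - gk *: d := x_succB k.+1 xs.
have mono := resolvent_strong_mono k.+1; rewrite -/gk -/xk -/yk in mono.
have E1 : normS (xk - xs) ^+ 2
    = normS (yk - xs) ^+ 2 - 2 * ⟨S (yk - xk), yk - xs⟩ + h ^+ 2.
  by rewrite Hxz sqr_snormB.
have E2 : ⟨u k.+1, xk - xs⟩ = ⟨u k.+1, yk - xs⟩ - ⟨u k.+1, yk - xk⟩.
  by rewrite Hxz innerBr.
have E3 : normS (x k.+2 - xs) ^+ 2 = normS (yk - xs) ^+ 2
    - 2 * gk * ⟨B yk - B xk, yk - xs⟩ + gk ^+ 2 * normS d ^+ 2.
  by rewrite Hwz sqr_snormB sqr_snormZ SZ innerZl SK mulrA.
have E4 : ⟨u k.+2, x k.+2 - xs⟩ = ⟨u k.+2, yk - xs⟩ - gk * ⟨u k.+2, d⟩.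
  by rewrite Hwz innerBr innerZr.
have d_le : normS d <= mu * h by rewrite -snorm_Sinv; exact: HBlip.
have Bmon : 0 <= gk * ⟨B yk - B xs, yk - xs⟩ := mulr_ge0 (ltW gk0) (HBmon _ _).
have Ccoco : gk * - (beta / 4 * h ^+ 2) <= gk * ⟨C xk - C xs, yk - xs⟩.
  by rewrite ler_pM2l //; exact: cocoercive_inner_ge.
have u1_le : 2 * ⟨u k.+1, yk - xk⟩ <= L k * (np ^+ 2 + h ^+ 2).
  have cs : ⟨u k.+1, yk - xk⟩ <= normSi (u k.+1) * h := inner_le_snorm _ _.
  have u_le : normSi (u k.+1) * h <= L k * np * h :=
    ler_wpM2r (snorm_ge0 _ _) (u_succ_le k).
  have := ler_wpM2l (HL0 k) (young_ineq np h 1 ltr01); rewrite divr1 mul1r => young.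
  lra.
have u2_ge : - (gk * (L k.+1 * mu * h ^+ 2)) <= gk * ⟨u k.+2, d⟩.
  have cs : - (normSi (u k.+2) * normS d) <= ⟨u k.+2, d⟩ := inner_ge_snorm _ _.
  have : normSi (u k.+2) * normS d <= L k.+1 * h * (mu * h).
    by apply: ler_pM; rewrite ?snorm_ge0 ?u_succ_le.
  rewrite -mulrN ler_pM2l //; lra.
have d2_le : gk ^+ 2 * normS d ^+ 2 <= gk ^+ 2 * (mu ^+ 2 * h ^+ 2).
  rewrite ler_wpM2l ?sqr_ge0 // -exprMn ler_pXn2r ?nnegrE ?snorm_ge0 //.
  exact: le_trans (snorm_ge0 _ _) d_le.
rewrite E1 E2 E3 E4; lra.
Qed.

Lemma lyap_contract k : (1 + t) * lyap k.+2 <= lyap k.+1.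
Proof.
have [g_lt t_le1 t_le2] := Hcond k.+1 isT.
set gk := g k.+1 in g_lt t_le1 t_le2 *.
have gk0 : 0 < gk := Hg k.+1.
set E := normS (y k.+1 - xs) ^+ 2; set H := normS (y k.+1 - x k.+1) ^+ 2.
set W := normS (x k.+2 - xs) ^+ 2.
(* the source of ν_k *)
have shrink : (1 - gk * eps1) * W <= E + gk * (eps1^-1 - gk) * (mu ^+ 2 * H).
  have := sqr_snorm_shrink (y k.+1 - xs) (Sinv (B (y k.+1) - B (x k.+1))) _ _ gk0 Heps1.
  rewrite -x_succB -snorm_Sinv -/W -/E => /le_trans; apply; rewrite lerD2l.
  rewrite ler_wpM2l ?mulr_ge0 ?subr_ge0 ?(ltW gk0) //; first by rewrite -div1r; exact: ltW.
  have B_lip := HBlip (y k.+1) (x k.+1).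
  rewrite -exprMn ler_pXn2r ?nnegrE ?snorm_ge0 //.
  exact: le_trans (snorm_ge0 _ _) B_lip.
have H0 : 0 <= H := sqr_ge0 _.
have W0 : 0 <= W := sqr_ge0 _.
have := lyap_descent k; rewrite -/gk -/E -/H => descent.
have := ler_wpM2l (ltW Ht) (lyap_le k.+1); rewrite -/W -/H => up.
have := ler_wpM2r W0 t_le1.
have := ler_wpM2r H0 t_le2.
have := ler_wpM2l (ltW (mulr_gt0 (mulr_gt0 (ltr0n _ 2) gk0) Hrho)) shrink.
rewrite div1r; lra.
Qed.

End NFBHF.
End Metric.
End InnerProduct.

Theorem theorem3p2
  (R : realType) (V : lmodType R) (ip : inner_product V)
  (Hcomplete : hilbert_complete ip)
  (* (A1) *)
  (S Sinv : V -> V) (HS : in_P ip S)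
  (HSinv : forall x, S (Sinv x) = x /\ Sinv (S x) = x)
  (A : V -> V -> Prop) (B C : V -> V) (mu beta : R)
  (HA : maximal_monotone ip A)
  (HBmon : monotone_op ip B) (Hmu : 0 <= mu) (HBlip : lipschitz_wrt ip S Sinv mu B)
  (Hbeta : 0 < beta) (HC : cocoercive_wrt ip Sinv beta C)
  (Hzer : exists z, A z (- (B z + C z)))
  (gam : R) (g L : nat -> R) (M : nat -> V -> V)
  (Hgam : 0 < gam) (Hg : forall k, gam <= g k)
  (HL : forall k, 0 <= L k /\ L k < 1)
  (HM : forall k, lipschitz_wrt ip S Sinv (L k) (fun x => g k *: M k x - S x))
  (* additional assumptions *)
  (rho : R) (Hrho : 0 < rho) (HAs : strongly_monotone_wrt ip S rho A)
  (HLbar : exists Lbar : R, Lbar < 1 /\ forall k, L k <= Lbar)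
  (eps1 eps2 t : R) (Heps1 : 0 < eps1) (Heps2 : 0 < eps2) (Ht : 0 < t)
  (Hcond : forall k : nat, (1 <= k)%N ->
     let kappa := 1 - L k.-1 - L k - 2 * g k * L k * mu - g k ^+ 2 * mu ^+ 2
                  - g k * beta / 2 in
     let nu := 2 * g k ^+ 2 * rho * mu ^+ 2 * (g k - 1 / eps1) in
     [/\ g k < 1 / eps1,
         t * (1 + L k / eps2) <= 2 * g k * rho * (1 - g k * eps1) &
         t * L k * (eps2 + 1) <= kappa + nu])
  (xs : V) (Hxs : A xs (- (B xs + C xs)))
  (x y u : nat -> V)
  (* Algorithm NFBHF-M: y_k = (M_k + A)^{-1}(M_k x_k - (B+C) x_k + g_k^{-1} u_k) *)
  (Hy : forall k, A (y k) (M k (x k) - (B (x k) + C (x k)) + (g k)^-1 *: u k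
                           - M k (y k)))
  (Hx : forall k, x k.+1 = y k - g k *: Sinv (B (y k)) + g k *: Sinv (B (x k)))
  (Hu : forall k, u k.+1 = (g k *: M k (y k) - S (y k)) - (g k *: M k (x k) - S (x k))) :
  let Phi1 := snorm ip S (x 1%N - xs) ^+ 2 + 2 * inner ip (u 1%N) (x 1%N - xs)
              + L 0%N * snorm ip S (y 0%N - x 0%N) ^+ 2 in
  (forall k : nat, (1 <= k)%N ->
     (1 - L k) * snorm ip S (x k.+1 - xs) ^+ 2 <= Phi1 / (1 + t) ^+ k) /\
  (exists c q : R, 0 <= q /\ q < 1 /\
     forall k : nat, hnorm ip (x k - xs) <= c * q ^+ k).
Proof.
move=> Phi1.
have g_gt0 k : 0 < g k := lt_le_trans Hgam (Hg k).
have L_ge0 k : 0 <= L k := (HL k).1.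
set Phi := @lyap R V ip S L xs x y u.
have contract := lyap_contract HS HSinv HBmon HBlip Hbeta HC g_gt0 L_ge0 HM
  Hrho HAs Hxs Heps1 Heps2 Ht Hcond Hy Hx Hu.
have t1_gt0 : 0 < 1 + t by rewrite addr_gt0.
have decay k : Phi k.+1 * (1 + t) ^+ k <= Phi1 :=
  geometric_decay (1 + t) (fun n => Phi n.+1) (ltW t1_gt0) contract k.
have bound k : (1 - L k) * snorm ip S (x k.+1 - xs) ^+ 2 <= Phi1 / (1 + t) ^+ k.
  apply: le_trans (_ : Phi k.+1 <= _); first exact: (lyap_ge HS HSinv L_ge0 HM Hu).
  by rewrite ler_pdivlMr ?exprn_gt0.
split=> [k _|]; first exact: bound.
case: HLbar => Lb [Lb_lt1 L_le]; case: (HS) => _ [_ [_ [m [m_gt0 m_le]]]].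
have Lb_gt0 : 0 < 1 - Lb by rewrite subr_gt0.
apply: (@r_linear_of_sqr_bound _ _ (Phi1 / ((1 - Lb) * m)) (1 + t)).
- apply: divr_ge0; last exact: mulr_ge0 (ltW Lb_gt0) (ltW m_gt0).
  have := bound 0%N; rewrite expr0 divr1; apply: le_trans.
  by rewrite mulr_ge0 ?sqr_ge0 // subr_ge0 ltW // (HL 0%N).2.
- by rewrite ltrDl.
move=> k; rewrite mulrAC ler_pdivlMr ?mulr_gt0 //.
have m_le' : m * hnorm ip (x k.+1 - xs) ^+ 2 <= snorm ip S (x k.+1 - xs) ^+ 2.
  by rewrite (sqr_snorm HS); exact: m_le.
have Lk_le : 1 - Lb <= 1 - L k by rewrite lerD2l lerN2.
have := ler_pM (ltW Lb_gt0) (mulr_ge0 (ltW m_gt0) (sqr_ge0 _)) Lk_le m_le'.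
move/le_trans/(_ (bound k)); lra.
Qed.
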